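(* Let $G$ be a finite simple graph and let $\mathcal{V}$ be a maximum-cardinality collection of pairwise edge-disjoint triangles of $G$. Then for every $\psi\in\mathcal{V}$: (1) $|base(\psi)| \neq 2$; (2) if $|base(\psi)|=3$, then exactly three triangles are singly-attached to $\psi$, and all of them share a common anchoring vertex $a$; in this case $V(\psi)\cup\{a\}$ induces a $K_4$.
   Context: Triangles are sets of three pairwise adjacent vertices, identified with their edge sets. Triangles in $\mathcal{V}$ are solution triangles. A triangle $t\notin\mathcal{V}$ shares at most one edge with each $\psi\in\mathcal{V}$. If $t\notin\mathcal{V}$ shares an edge with exactly one triangle $\psi\in\mathcal{V}$, $t$ is singly-attached to $\psi$; the edge in $E(t)\cap E(\psi)$ is called a base-edge, and the vertex of $V(t)\setminus V(\psi)$ is the anchoring vertex of $t$. For $\psi\in\mathcal{V}$, $base(\psi)$ denotes the set of edges of $\psi$ that are base-edges (i.e., that lie in some triangle singly-attached to $\psi$). *)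

(* A finite simple graph is a finType T of vertices with a
   symmetric irreflexive adjacency relation e : rel T. Vertex sets are {set T}. *)
From mathcomp Require Import all_boot.
Set Implicit Arguments. Unset Strict Implicit. Unset Printing Implicit Defensive.

Section Triangles.
Variables (T : finType) (e : rel T).

Definition clique (S : {set T}) : bool :=
  [forall x in S, forall y in S, (x != y) ==> e x y].

Definition triangle (t : {set T}) : bool := (#|t| == 3) && clique t.

Definition edges (t : {set T}) : {set {set T}} :=
  [set p : {set T} | (p \subset t) && (#|p| == 2)].

Definition share_edge (t u : {set T}) : bool := edges t :&: edges u != set0.

Definition edge_disjoint_packing (V : {set {set T}}) : bool :=
  [forall t in V, triangle t] &&
  [forall t in V, forall u in V, (t != u) ==> ~~ share_edge t u].

Definition maximum_packing (V : {set {set T}}) : Prop :=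
  edge_disjoint_packing V /\
  forall W : {set {set T}}, edge_disjoint_packing W -> #|W| <= #|V|.

Definition singly_attached (V : {set {set T}}) (t psi : {set T}) : bool :=
  [&& triangle t, t \notin V, psi \in V, share_edge t psi &
      [forall u in V, share_edge t u ==> (u == psi)]].

Definition base (V : {set {set T}}) (psi : {set T}) : {set {set T}} :=
  [set f in edges psi | [exists t, singly_attached V t psi && (f \in edges t)]].

Definition anchored_at (t psi : {set T}) (a : T) : bool := t :\: psi == [set a].

End Triangles.

From mathcomp Require Import all_boot.
Set Implicit Arguments. Unset Strict Implicit. Unset Printing Implicit Defensive.

(* A triangle t singly-attached to psi has the form a |: (psi :\ v) with
   a \notin psi, and its base-edge is psi :\ v. Two distinct triangles
   singly-attached to psi must share an edge: otherwise replacing psi by both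
   of them in V yields a larger packing. Two singly-attached triangles with
   different base-edges meet in psi only at one vertex, so the shared edge
   forces a common anchor a. Then every pair of vertices of a |: psi lies in
   psi or in one of these two triangles, so a |: psi is a K4 and each of the
   three triangles a |: (psi :\ u) is singly-attached to psi. Hence as soon
   as two base-edges exist, all three edges of psi are base-edges, with the
   same anchor. *)

Section Cliques.
Variables (T : finType) (e : rel T).

Lemma cliqueP (S : {set T}) :
  reflect {in S &, forall x y, x != y -> e x y} (clique e S).
Proof.
apply: (iffP forallP) => [cS x y xS yS | cS x].
  by move/implyP: (cS x) => /(_ xS)/forallP/(_ y)/implyP/(_ yS)/implyP.
by apply/implyP=> xS; apply/forallP=> y; apply/implyP=> yS; apply/implyP; apply: cS.
Qed.

Lemma cliqueS (A B : {set T}) : A \subset B -> clique e B -> clique e A.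
Proof.
by move=> /subsetP AB /cliqueP cB; apply/cliqueP=> x y xA yA; apply: cB; apply: AB.
Qed.

Lemma triangle_card (t : {set T}) : triangle e t -> #|t| = 3.
Proof. by case/andP=> /eqP. Qed.

Lemma triangle_clique (t : {set T}) : triangle e t -> clique e t.
Proof. by case/andP. Qed.

End Cliques.

Section SharedEdges.
Variable T : finType.
Implicit Types t u : {set T}.

Lemma share_edgeE t u : share_edge t u = (1 < #|t :&: u|).
Proof.
apply/set0Pn/card_gt1P => [[p] | [x [y [xtu ytu xy]]]].
  rewrite !inE => /andP[/andP[pt /eqP p2] /andP[pu _]].
  have /card_gt1P[x [y [xp yp xy]]] : 1 < #|p| by rewrite p2.
  by exists x, y; rewrite !inE !(subsetP pt, subsetP pu).
exists [set x; y]; move: xtu ytu; rewrite !inE cards2 xy !subUset !sub1set.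
by move=> /andP[-> ->] /andP[-> ->].
Qed.

Lemma share_edgeC t u : share_edge t u = share_edge u t.
Proof. by rewrite !share_edgeE setIC. Qed.

Lemma share_edge_pair t u x y :
  x != y -> x \in t -> y \in t -> x \in u -> y \in u -> share_edge t u.
Proof.
move=> xy xt yt xu yu; rewrite share_edgeE; apply/card_gt1P.
by exists x, y; rewrite !inE xt xu yt yu.
Qed.

Lemma share_edge_card3 t u : #|t| = 3 -> #|u| = 3 -> t != u -> share_edge t u ->
  exists v a, [/\ v \in u, a \notin u & t = a |: (u :\ v)].
Proof.
move=> t3 u3 tu; rewrite share_edgeE => gt1.
have tIu2 : #|t :&: u| = 2.
  apply/eqP; rewrite eqn_leq gt1 andbT -ltnS ltn_neqAle -{2}t3 subset_leq_card ?subsetIl //.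
  rewrite andbT; apply: contra tu => /eqP tIu3.
  have tIu_t : t :&: u = t by apply/eqP; rewrite eqEcard subsetIl t3 tIu3.
  by rewrite -{1}tIu_t eqEcard subsetIr u3 tIu3.
have /cards1P[a tDu] : #|t :\: u| == 1.
  by rewrite -(eqn_add2l 2) -{1}tIu2 cardsID t3.
have /cards1P[v uDt] : #|u :\: t| == 1.
  by rewrite -(eqn_add2l 2) -{1}tIu2 setIC cardsID u3.
have [/setP aE /setP vE] := (tDu, uDt).
have := aE a; have := vE v; rewrite !inE !eqxx => /andP[_ vu] /andP[au _].
exists v, a; split=> //; apply/setP=> x; have := aE x; have := vE x; rewrite !inE.
by case: (x \in t); case: (x \in u) => /= <- <-.
Qed.

End SharedEdges.

Section Cones.
Variables (T : finType) (psi : {set T}).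

Lemma coneI (a v : T) : a \notin psi -> (a |: (psi :\ v)) :&: psi = psi :\ v.
Proof.
move=> apsi; apply/setP=> x; rewrite !inE.
by case: eqP => [->|_]; rewrite ?(negbTE apsi) ?andbF //= -andbA andbb.
Qed.

Lemma coneD (a v : T) : a \notin psi -> (a |: (psi :\ v)) :\: psi = [set a].
Proof.
move=> apsi; apply/setP=> x; rewrite !inE.
by case: eqP => [->|_]; rewrite ?apsi //=; case: (x \in psi); rewrite ?andbF.
Qed.

Lemma cone_inj (a b v w : T) :
  b \notin psi -> w \in psi -> a |: (psi :\ v) = b |: (psi :\ w) -> v = w.
Proof.
move=> bpsi wpsi /setP/(_ w); rewrite !inE eqxx wpsi andbT /= orbF.
have -> : (w == b) = false by apply: contraNF bpsi => /eqP <-.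
by move/negbT/norP=> [_ /negbNE/eqP].
Qed.

Lemma setD1_inj : {in psi &, injective (fun u => psi :\ u)}.
Proof.
move=> u w _ wpsi /setP/(_ w); rewrite !inE eqxx wpsi andbT /=.
by case: eqP.
Qed.

Hypothesis psi3 : #|psi| = 3.

Lemma cardsD1_3 (v : T) : v \in psi -> #|psi :\ v| = 2.
Proof. by move=> vpsi; move: psi3; rewrite (cardsD1 v) vpsi => [[]]. Qed.

Lemma cone_card (a v : T) : a \notin psi -> v \in psi -> #|a |: (psi :\ v)| = 3.
Proof. by move=> apsi vpsi; rewrite cardsU1 !inE (negbTE apsi) andbF cardsD1_3. Qed.

Lemma share_edge_cones (a b v w : T) : a \notin psi -> b \notin psi ->
  v \in psi -> w \in psi -> v != w ->
  share_edge (a |: (psi :\ v)) (b |: (psi :\ w)) -> a = b.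
Proof.
move=> apsi bpsi vpsi wpsi vw; apply: contraTeq => ab; rewrite share_edgeE -leqNgt.
have <- : #|psi :\ v :\ w| = 1.
  by have := cardsD1_3 vpsi; rewrite (cardsD1 w) !inE eq_sym vw wpsi => [[]].
apply/subset_leq_card/subsetP => x; rewrite !inE.
case: (eqVneq x a) => [->|xa]; first by rewrite (negbTE apsi) eq_sym (negbTE ab) !andbF.
case: (eqVneq x b) => [->|xb]; first by rewrite (negbTE bpsi) !andbF.
by case/andP=> /andP[-> ->] /andP[-> _].
Qed.

End Cones.

Section Packings.
Variables (T : finType) (e : rel T).
Implicit Types (W : {set {set T}}) (t : {set T}).

Lemma edge_disjoint_packingP W :
  reflect ({in W, forall t, triangle e t} /\
           {in W &, forall t u, t != u -> ~~ share_edge t u})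
          (edge_disjoint_packing e W).
Proof.
apply: (iffP andP) => [[/forallP triW /forallP disjW] | [triW disjW]]; split.
- by move=> t tW; move/implyP: (triW t); apply.
- move=> t u tW uW; move/implyP: (disjW t) => /(_ tW)/forallP/(_ u).
  by move/implyP/(_ uW)/implyP.
- by apply/forallP=> t; apply/implyP; apply: triW.
- apply/forallP=> t; apply/implyP=> tW; apply/forallP=> u; apply/implyP=> uW.
  by apply/implyP; apply: disjW.
Qed.

Lemma edge_disjoint_packingS W1 W2 :
  W1 \subset W2 -> edge_disjoint_packing e W2 -> edge_disjoint_packing e W1.
Proof.
move=> /subsetP W12 /edge_disjoint_packingP[triW disjW].
by apply/edge_disjoint_packingP; split=> [t /W12 | t u /W12 tW /W12 uW]; auto.
Qed.

Lemma edge_disjoint_packingU1 W t :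
  edge_disjoint_packing e W -> triangle e t ->
  {in W, forall u, ~~ share_edge t u} -> edge_disjoint_packing e (t |: W).
Proof.
move=> /edge_disjoint_packingP[triW disjW] tri_t disj_t.
apply/edge_disjoint_packingP; split=> [u | u1 u2].
  by case/setU1P=> [->|]; last exact: triW.
case/setU1P=> [->|u1W] /setU1P[->|u2W]; rewrite ?eqxx // => u12.
- exact: disj_t.
- by rewrite share_edgeC; apply: disj_t.
- exact: disjW.
Qed.

End Packings.

Section MaximumPacking.
Variables (T : finType) (e : rel T) (V : {set {set T}}) (psi : {set T}).
Hypotheses (maxV : maximum_packing e V) (psiV : psi \in V).

Lemma packing_triangle t : t \in V -> triangle e t.
Proof. by case: maxV => /edge_disjoint_packingP[triV _] _; apply: triV. Qed.

Lemma packing_disjoint t u : t \in V -> u \in V -> t != u -> ~~ share_edge t u.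
Proof. by case: maxV => /edge_disjoint_packingP[_ disjV] _; apply: disjV. Qed.

Lemma psi_card : #|psi| = 3.
Proof. exact/triangle_card/packing_triangle. Qed.

Lemma singly_attachedP t :
  reflect [/\ triangle e t, t \notin V, share_edge t psi &
              {in V, forall u, share_edge t u -> u = psi}]
          (singly_attached e V t psi).
Proof.
apply: (iffP and5P) => [[tri_t tV _ t_psi /forallP only] | [tri_t tV t_psi only]].
  split=> // u uV; move/implyP: (only u) => /(_ uV)/implyP H.
  by move/H/eqP.
split=> //; apply/forallP=> u; apply/implyP=> uV; apply/implyP.
by move/(only _ uV)->.
Qed.

Lemma singly_attached_share_edge t1 t2 :
  singly_attached e V t1 psi -> singly_attached e V t2 psi ->
  t1 != t2 -> share_edge t1 t2.
Proof.
move=> /singly_attachedP[tri1 t1V _ only1] /singly_attachedP[tri2 t2V _ only2] t12.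
apply: contraT => disj12.
have away t : {in V, forall u, share_edge t u -> u = psi} ->
    {in V :\ psi, forall u, ~~ share_edge t u}.
  by move=> only u /setD1P[upsi uV]; apply: contra upsi => /(only _ uV)->.
have packW : edge_disjoint_packing e (t1 |: (t2 |: (V :\ psi))).
  apply: edge_disjoint_packingU1 => //; last by move=> u /setU1P[-> | /(away _ only1)].
  apply: edge_disjoint_packingU1 (away _ only2) => //.
  by apply: edge_disjoint_packingS (subsetDl _ _) _; case: maxV.
case: maxV => _ /(_ _ packW).
rewrite cardsU1 cardsU1 !inE (negbTE t12) (negbTE t1V) (negbTE t2V) !andbF /=.
by rewrite (cardsD1 psi V) psiV ltnn.
Qed.

Lemma singly_attached_cone t : singly_attached e V t psi ->
  exists v a, [/\ v \in psi, a \notin psi & t = a |: (psi :\ v)].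
Proof.
case/singly_attachedP=> tri_t tV t_psi _.
apply: (share_edge_card3 (triangle_card tri_t) psi_card _ t_psi).
by apply: contraNneq tV => ->.
Qed.

Lemma singly_attached_anchor v w a b :
  v \in psi -> w \in psi -> v != w -> a \notin psi -> b \notin psi ->
  singly_attached e V (a |: (psi :\ v)) psi ->
  singly_attached e V (b |: (psi :\ w)) psi -> a = b.
Proof.
move=> vpsi wpsi vw apsi bpsi SAv SAw.
apply: (share_edge_cones psi_card apsi bpsi vpsi wpsi vw).
apply: (singly_attached_share_edge SAv SAw).
by apply: contra vw => /eqP/(cone_inj bpsi wpsi)->.
Qed.

Lemma baseP f :
  reflect (exists v a, [/\ v \in psi, a \notin psi,
                          singly_attached e V (a |: (psi :\ v)) psi & f = psi :\ v])
          (f \in base e V psi).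
Proof.
rewrite inE; apply: (iffP andP) => [[] | [v [a [vpsi apsi SAv ->]]]].
  rewrite inE => /andP[fpsi /eqP f2] /existsP[t /andP[SAt]].
  have [v [a [vpsi apsi tE]]] := singly_attached_cone SAt.
  rewrite tE inE => /andP[ft _]; exists v, a; split; rewrite -?tE //.
  apply/eqP; rewrite eqEcard cardsD1_3 ?psi_card // f2 leqnn andbT -(coneI v apsi).
  by rewrite subsetI ft fpsi.
split; first by rewrite inE subsetDl cardsD1_3 ?psi_card.
by apply/existsP; exists (a |: (psi :\ v)); rewrite SAv inE subsetUr cardsD1_3 ?psi_card.
Qed.

Definition confined t := triangle e t /\ {in V, forall u, share_edge t u -> u = psi}.

Lemma confined_psi : confined psi.
Proof.
split=> [|u uV]; first exact: packing_triangle.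
by apply: contraTeq => upsi; rewrite share_edgeC packing_disjoint.
Qed.

Section CommonAnchor.
Variables (v w a : T).
Hypotheses (vpsi : v \in psi) (wpsi : w \in psi) (vw : v != w) (apsi : a \notin psi).
Hypotheses (SAv : singly_attached e V (a |: (psi :\ v)) psi)
           (SAw : singly_attached e V (a |: (psi :\ w)) psi).

Lemma pair_confined x y : x \in a |: psi -> y \in a |: psi ->
  exists2 t, confined t & (x \in t) && (y \in t).
Proof.
have SA_confined t : singly_attached e V t psi -> confined t.
  by case/singly_attachedP.
have apex q : q \in psi -> exists2 t, confined t & (a \in t) && (q \in t).
  move=> qpsi; have [-> | qv] := eqVneq q v.
    by exists (a |: (psi :\ w)); [exact: SA_confined | rewrite !inE eqxx vw vpsi orbT].
  by exists (a |: (psi :\ v)); [exact: SA_confined | rewrite !inE eqxx qv qpsi orbT].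
case/setU1P=> [-> | xpsi] /setU1P[-> | ypsi].
- by exists (a |: (psi :\ v)); [exact: SA_confined | rewrite !inE eqxx].
- exact: apex.
- by have [t ? /andP[]] := apex _ xpsi; exists t => //; apply/andP.
- by exists psi; [exact: confined_psi | rewrite xpsi ypsi].
Qed.

Lemma clique_apex : clique e (a |: psi).
Proof.
apply/cliqueP=> x y xK yK xy.
have [t [tri_t _] /andP[xt yt]] := pair_confined xK yK.
by have /cliqueP := triangle_clique tri_t; apply.
Qed.

Lemma singly_attached_apex u : u \in psi -> singly_attached e V (a |: (psi :\ u)) psi.
Proof.
move=> upsi; have t_psi : share_edge (a |: (psi :\ u)) psi.
  by rewrite share_edgeE coneI // cardsD1_3 ?psi_card.
have sub_apex : a |: (psi :\ u) \subset a |: psi by rewrite setUS ?subsetDl.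
apply/singly_attachedP; split=> //.
- by rewrite /triangle cone_card ?psi_card //= (cliqueS sub_apex clique_apex).
- have t_neq_psi : a |: (psi :\ u) != psi.
    by apply: contraNneq apsi => <-; rewrite !inE eqxx.
  by apply: contraTN t_psi => tV; rewrite packing_disjoint.
- move=> U UV; rewrite share_edgeE => /card_gt1P[x [y [/setIP[xt xU] /setIP[yt yU] xy]]].
  have [t [_ only] /andP[xt' yt']] :=
    pair_confined (subsetP sub_apex _ xt) (subsetP sub_apex _ yt).
  exact/only/(share_edge_pair xy xt' yt' xU yU).
Qed.

Lemma singly_attached_setE :
  [set t | singly_attached e V t psi] = [set a |: (psi :\ u) | u in psi].
Proof.
apply/setP=> t; rewrite inE; apply/idP/imsetP => [SAt | [u upsi ->]]; last first.
  exact: singly_attached_apex.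
have [u [b [upsi bpsi tE]]] := singly_attached_cone SAt.
exists u => //; rewrite tE in SAt *; congr (_ |: _).
have [uv | uv] := eqVneq u v.
  by apply: (singly_attached_anchor upsi wpsi _ bpsi apsi); rewrite // uv.
exact: (singly_attached_anchor upsi vpsi uv bpsi apsi).
Qed.

Lemma base_setE : base e V psi = [set psi :\ u | u in psi].
Proof.
apply/setP=> f; apply/baseP/imsetP => [[u [b [upsi _ _ ->]]] | [u upsi ->]].
  by exists u.
by exists u, a; split=> //; apply: singly_attached_apex.
Qed.

End CommonAnchor.

Lemma base_gt1 : 1 < #|base e V psi| ->
  exists2 a, a \notin psi &
    [/\ base e V psi = [set psi :\ u | u in psi],
        [set t | singly_attached e V t psi] = [set a |: (psi :\ u) | u in psi] &
        clique e (a |: psi)].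
Proof.
case/card_gt1P=> _ [_ [/baseP[v [a [vpsi apsi SAv ->]]] /baseP[w [b [wpsi bpsi SAw ->]]]]].
move=> vw; have {}vw : v != w by apply: contraNneq vw => ->.
have ab := singly_attached_anchor vpsi wpsi vw apsi bpsi SAv SAw; subst b.
exists a => //; split.
- exact: base_setE vpsi vw apsi SAv SAw.
- exact: singly_attached_setE vpsi wpsi vw apsi SAv SAw.
- exact: clique_apex vpsi vw SAv SAw.
Qed.

End MaximumPacking.

Theorem proposition8 (T : finType) (e : rel T)
  (e_sym : symmetric e) (e_irr : irreflexive e)
  (V : {set {set T}}) (HV : maximum_packing e V) :
  forall psi, psi \in V ->
    #|base e V psi| != 2 /\
    (#|base e V psi| = 3 ->
       #|[set t | singly_attached e V t psi]| = 3 /\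
       exists a : T,
         (forall t, singly_attached e V t psi -> anchored_at t psi a) /\
         a \notin psi /\ clique e (psi :|: [set a])).
Proof.
move=> psi psiV; have psi3 := psi_card HV psiV.
have [/(base_gt1 HV psiV)[a apsi [baseE attachedE K4]] | base_le1] :=
  ltnP 1 #|base e V psi|; last first.
  by split=> [|base3]; [apply: contraTneq base_le1 => -> | rewrite base3 in base_le1].
have base3 : #|base e V psi| = 3.
  by rewrite baseE card_in_imset ?psi3 //; apply: setD1_inj.
split=> [|_]; first by rewrite base3.
split; first by rewrite attachedE card_in_imset ?psi3 // => u w _ wpsi /(cone_inj apsi wpsi).
exists a; split=> [t SAt|]; last by rewrite setUC.
have /imsetP[u upsi ->] : t \in [set a |: (psi :\ u) | u in psi] by rewrite -attachedE inE.
by rewrite /anchored_at coneD.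
Qed.
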